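(* Suppose $|X|\ge3$ and let $t$ be a full support, state independent transition function, written $t(x)\in\Delta(\mathcal{L}(X))$. Then $t$ is menu invariant if and only if $t(x)=t(y)$ for all $x,y\in X$.
   Context: $X$ is finite, $\mathcal{X}_2$ the subsets of $X$ with at least two elements, $\mathcal{L}(X)$ the linear orders on $X$, $M(\succ,A)$ the $\succ$-maximal element of $A$. A transition function $t:X\times\mathcal{L}(X)\to\Delta(\mathcal{L}(X))$ is full support if all values have full support, and state independent if $t(x,\succ)=t(x,\succ')$ for all $x,\succ,\succ'$. For $A\in\mathcal{X}_2$, $M_A$ is the Markov matrix on $\mathcal{L}(X)$ with $m_A(\succ,\succ')=t_{\succ'}(M(\succ,A),\succ)$ (probability of $\succ'$ under $t(M(\succ,A),\succ)$), with unique stationary distribution $\nu_A$. $t$ is menu invariant if $\nu_A=\nu_B$ for all $A,B\in\mathcal{X}_2$. *)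

From HB Require Import structures.
From mathcomp Require Import all_boot all_order all_algebra.
Set Implicit Arguments. Unset Strict Implicit. Unset Printing Implicit Defensive.
Import Order.TTheory GRing.Theory Num.Theory.
Local Open Scope ring_scope.

Section Defs.
Variable X : finType.

(* A (strict) linear order on X, encoded as a boolean relation r with
   r (x, y) meaning "x is strictly preferred to y" (x ≻ y):
   irreflexive, transitive and total on distinct elements. *)
Definition is_linear_order (r : {ffun X * X -> bool}) : bool :=
  [&& [forall x, ~~ r (x, x)],
      [forall x, forall y, forall z, r (x, y) && r (y, z) ==> r (x, z)]
    & [forall x, forall y, (x != y) ==> r (x, y) || r (y, x)]].

Definition linord : Type := {r : {ffun X * X -> bool} | is_linear_order r}.
HB.instance Definition _ := Finite.on linord.

Definition menu (A : {set X}) : bool := (1 < #|A|)%N.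

(* M(≻, A): the ≻-maximal element of A (None only if A has none, which
   never happens for nonempty A). *)
Definition maxel (o : linord) (A : {set X}) : option X :=
  [pick x in A | [forall y in A, (y != x) ==> val o (x, y)]].

Variable R : realFieldType.

Definition is_dist (p : {ffun linord -> R}) : Prop :=
  (forall o, 0 <= p o) /\ \sum_o p o = 1.

Definition transition := X -> linord -> {ffun linord -> R}.

Definition is_transition (t : transition) : Prop :=
  forall x o, is_dist (t x o).

Definition full_support (t : transition) : Prop :=
  forall x o o', 0 < t x o o'.

Definition state_independent (t : transition) : Prop :=
  forall x o o', t x o = t x o'.

(* m_A(≻, ≻') = t_{≻'}(M(≻, A), ≻). *)
Definition markov (t : transition) (A : {set X}) (o o' : linord) : R :=
  match maxel o A with
  | Some x => t x o o'
  | None => 0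
  end.

Definition stationary (t : transition) (A : {set X}) (nu : {ffun linord -> R}) : Prop :=
  is_dist nu /\ forall o', \sum_o nu o * markov t A o o' = nu o'.

(* ν_A = ν_B for all menus A, B: any stationary distribution of M_A equals
   any stationary distribution of M_B (ν_A is unique under full support). *)
Definition menu_invariant (t : transition) : Prop :=
  forall A B, menu A -> menu B ->
  forall nuA nuB, stationary t A nuA -> stationary t B nuB -> nuA = nuB.

End Defs.

(* For a state independent t, write p_x := t(x). A stationary distribution of
   M_A is a convex combination of the rows p_x, x in A, weighted by the
   probability that x is the maximum of A. If all rows coincide it is that
   row, whatever A is. Conversely, for a pair menu {x, y} the chain only
   tracks which of x, y is on top, so nu_{x,y} lies strictly inside the
   segment [p_x, p_y] (full support rules out the endpoints). With a third
   alternative z, menu invariance puts one point strictly inside all three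
   edges of the triangle p_x p_y p_z, which forces p_x = p_y. *)

From mathcomp Require Import all_boot all_order all_algebra.
From mathcomp Require Import ring lra.
Import Order.TTheory GRing.Theory Num.Theory.
Set Implicit Arguments. Unset Strict Implicit. Unset Printing Implicit Defensive.
Local Open Scope ring_scope.

Section LinearOrders.
Variable X : finType.
Implicit Types (o : linord X) (u v w : X).

Lemma linord_irr o u : ~~ val o (u, u).
Proof. by case/and3P: (valP o) => /forallP. Qed.

Lemma linord_trans o u v w : val o (u, v) -> val o (v, w) -> val o (u, w).
Proof.
case/and3P: (valP o) => _ /forallP htr _ huv hvw.
by move/forallP/(_ v)/forallP/(_ w)/implyP: (htr u); apply; rewrite huv.
Qed.

Lemma linord_total o u v : u != v -> val o (u, v) || val o (v, u).
Proof.
by case/and3P: (valP o) => _ _ /forallP htot; move/forallP/(_ v)/implyP: (htot u).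
Qed.

Lemma linord_asym o u v : val o (u, v) -> ~~ val o (v, u).
Proof. by move=> huv; apply: contraNN (linord_irr o u); apply: linord_trans. Qed.

Lemma rank_order_is_linear :
  is_linear_order [ffun uv : X * X => (enum_rank uv.1 < enum_rank uv.2)%N].
Proof.
apply/and3P; split.
- by apply/forallP => u; rewrite ffunE ltnn.
- apply/forallP => u; apply/forallP => v; apply/forallP => w; rewrite !ffunE /=.
  by apply/implyP => /andP[]; apply: ltn_trans.
- apply/forallP => u; apply/forallP => v; apply/implyP => nuv.
  rewrite !ffunE /= -neq_ltn.
  by apply: contra nuv => /eqP/val_inj/enum_rank_inj ->.
Qed.

Definition rank_order : linord X :=
  exist (fun r => is_linear_order r) _ rank_order_is_linear.

Lemma converse_is_linear o : is_linear_order [ffun uv : X * X => val o (uv.2, uv.1)].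
Proof.
apply/and3P; split.
- by apply/forallP => u; rewrite ffunE linord_irr.
- apply/forallP => u; apply/forallP => v; apply/forallP => w; rewrite !ffunE /=.
  by apply/implyP => /andP[hvu hwv]; apply: linord_trans hwv hvu.
- apply/forallP => u; apply/forallP => v; apply/implyP => nuv.
  rewrite !ffunE /= orbC.
  exact: linord_total.
Qed.

Definition converse_order o : linord X :=
  exist (fun r => is_linear_order r) _ (converse_is_linear o).

Lemma exists_linord u v : u != v -> exists o, val o (u, v).
Proof.
move=> nuv; have /orP[huv | hvu] := linord_total rank_order nuv.
  by exists rank_order.
by exists (converse_order rank_order); rewrite /= ffunE.
Qed.

Lemma menu_pair u v : u != v -> menu [set u; v].
Proof. by move=> nuv; rewrite /menu cards2 nuv. Qed.

Lemma exists_neq_pair u v : (2 < #|X|)%N -> exists2 w, w != u & w != v.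
Proof.
move=> X_gt2; have : (0 < #|~: [set u; v]|)%N.
  by rewrite cardsCs setCK cards2 subn_gt0; apply: leq_ltn_trans X_gt2; case: (u != v).
by case/card_gt0P => w; rewrite !inE negb_or => /andP[wu wv]; exists w.
Qed.

Lemma maxel_eq_Some o (A : {set X}) u :
  u \in A -> (forall v, v \in A -> v != u -> val o (u, v)) -> maxel o A = Some u.
Proof.
move=> uA umax; rewrite /maxel; case: pickP => [w /andP[wA /forall_inP wmax] | nomax].
  apply/eqP/negPn/negP => wu; have uw : u != w by rewrite eq_sym.
  have := wmax u uA; rewrite uw /=.
  by apply/negP/linord_asym/umax.
have := nomax u; rewrite uA => /negP; case; apply/forall_inP => v vA.
by apply/implyP; apply: umax.
Qed.

Lemma maxel_pair o u v : u != v ->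
  maxel o [set u; v] = Some (if val o (u, v) then u else v).
Proof.
move=> nuv; apply: maxel_eq_Some; first by case: ifP; rewrite !inE eqxx ?orbT.
move=> w; rewrite !inE; case: ifP => huv /orP[] /eqP -> //; rewrite ?eqxx //.
by have := linord_total o nuv; rewrite huv.
Qed.

End LinearOrders.

Section ConvexAlgebra.
Variable R : realFieldType.

Lemma eq_of_point_inside_edges (a b c P Q Z : R) :
  0 < a < 1 -> 0 < b < 1 -> 0 < c < 1 ->
  a * P + (1 - a) * Q = b * P + (1 - b) * Z ->
  a * P + (1 - a) * Q = c * Q + (1 - c) * Z -> P = Q.
Proof.
move=> /andP[a0 a1] /andP[b0 b1] /andP[c0 c1] ePZ eQZ.
have K0 : 0 < c * a * (1 - b) + b * (1 - a) * (1 - c).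
  have : 0 < c * a * (1 - b) by rewrite !mulr_gt0 // subr_gt0.
  have : 0 <= b * (1 - a) * (1 - c) by rewrite !mulr_ge0 // ?subr_ge0 ltW.
  lra.
have : (P - Q) * (c * a * (1 - b) + b * (1 - a) * (1 - c)) =
   (1 - c) * ((b * P + (1 - b) * Z) - (a * P + (1 - a) * Q))
 - (1 - b) * ((c * Q + (1 - c) * Z) - (a * P + (1 - a) * Q)) by ring.
rewrite -ePZ -eQZ !subrr !mulr0 subrr => /eqP.
by rewrite mulf_eq0 (gt_eqF K0) orbF subr_eq0 => /eqP.
Qed.

Variable T : finType.

Lemma sumr_gt0 (F : T -> R) (S : pred T) i :
  (forall j, 0 < F j) -> S i -> 0 < \sum_(j | S j) F j.
Proof.
move=> F_gt0 Si; rewrite (bigD1 i) //=; apply: ltr_pwDl (F_gt0 i) _.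
by apply: sumr_ge0 => j _; apply: ltW.
Qed.

Definition mix (a : R) (F G : {ffun T -> R}) : {ffun T -> R} :=
  [ffun i => a * F i + (1 - a) * G i].

Lemma sum_mix a (F G : {ffun T -> R}) :
  \sum_i F i = 1 -> \sum_i G i = 1 -> \sum_i mix a F G i = 1.
Proof.
move=> F1 G1; under eq_bigr do rewrite ffunE.
by rewrite big_split /= -!mulr_sumr F1 G1; ring.
Qed.

(* The chain that jumps according to F from states in S and according to G
   elsewhere only sees the two blocks; a solves the balance equation
   (1 - a) * beta = a * (1 - alpha) between them. *)
Lemma two_block_stationary (F G : {ffun T -> R}) (S : pred T) :
  let alpha := \sum_(i | S i) F i in let beta := \sum_(i | S i) G i in
  let a := beta / (1 - alpha + beta) in
  \sum_i F i = 1 -> \sum_i G i = 1 -> 1 - alpha + beta != 0 ->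
  forall j, \sum_i mix a F G i * (if S i then F j else G j) = mix a F G j.
Proof.
move=> alpha beta a F1 G1 D0 j.
have mass_S : \sum_(i | S i) mix a F G i = a.
  under eq_bigr do rewrite ffunE.
  rewrite big_split /= -!mulr_sumr -/alpha -/beta.
  have : a * (1 - alpha + beta) = beta by rewrite divfK.
  lra.
rewrite (bigID S) /=.
under eq_bigr => i Si do rewrite Si.
under [X in _ + X]eq_bigr => i nSi do rewrite (negbTE nSi).
rewrite -!mulr_suml mass_S.
have -> : \sum_(i | ~~ S i) mix a F G i = 1 - a.
  by have := sum_mix a F1 G1; rewrite (bigID S) /= mass_S; lra.
by rewrite ffunE.
Qed.

Lemma eq_of_stationary_rank_one (nu q : {ffun T -> R}) (w : T -> R) :
  \sum_i nu i = 1 -> \sum_i q i = 1 ->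
  (forall j, \sum_i nu i * (w i * q j) = nu j) -> nu = q.
Proof.
move=> nu1 q1 stat; pose s := \sum_i nu i * w i.
have nu_q j : nu j = s * q j.
  by rewrite -stat /s mulr_suml; apply: eq_bigr => i _; rewrite mulrA.
have s1 : s = 1 by rewrite -nu1 (eq_bigr _ (fun j _ => nu_q j)) -mulr_sumr q1 mulr1.
by apply/ffunP => j; rewrite nu_q s1 mul1r.
Qed.

End ConvexAlgebra.

Section StateIndependent.
Variables (X : finType) (R : realFieldType) (t : transition X R).
Hypotheses (t_dist : is_transition t) (t_si : state_independent t).

Let p (x : X) : {ffun linord X -> R} := t x (rank_order X).

Let t_row x o : t x o = p x. Proof. exact: t_si. Qed.

Let p_sum x : \sum_o p x o = 1. Proof. by case: (t_dist x (rank_order X)). Qed.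

Lemma stationary_eq_row (x0 : X) :
  (forall x y o, t x o = t y o) ->
  forall A nu, stationary t A nu -> nu = p x0.
Proof.
move=> rows_eq A nu [[_ nu1] stat].
apply: (eq_of_stationary_rank_one (w := fun o => if maxel o A is Some _ then 1 else 0)) => //.
move=> o'; rewrite -[RHS]stat; apply: eq_bigr => o _; rewrite /markov.
by case: maxel => [x|]; rewrite ?mul1r ?mul0r // (rows_eq x x0) t_row.
Qed.

Lemma rows_eq_menu_invariant : (forall x y o, t x o = t y o) -> menu_invariant t.
Proof.
move=> rows_eq A B menuA _ nuA nuB stA stB.
have [x0 _] := card_gt0P (ltnW menuA).
by rewrite (stationary_eq_row x0 rows_eq stA) (stationary_eq_row x0 rows_eq stB).
Qed.

Hypothesis t_full : full_support t.

Lemma markov_pair u v o o' : u != v ->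
  markov t [set u; v] o o' = if val o (u, v) then p u o' else p v o'.
Proof. by move=> nuv; rewrite /markov maxel_pair //; case: ifP; rewrite t_row. Qed.

Lemma pair_stationary u v : u != v ->
  exists2 a : R, 0 < a < 1 & stationary t [set u; v] (mix a (p u) (p v)).
Proof.
move=> nuv; pose S (o : linord X) := val o (u, v).
pose alpha := \sum_(o | S o) p u o; pose beta := \sum_(o | S o) p v o.
have beta_gt0 : 0 < beta.
  by have [o huv] := exists_linord nuv; apply: sumr_gt0 (t_full _ _) huv.
have alpha_lt1 : alpha < 1.
  have [o hvu] : exists o : linord X, val o (v, u) by apply: exists_linord; rewrite eq_sym.
  have : 0 < \sum_(o | ~~ S o) p u o by apply: sumr_gt0 (t_full _ _) (linord_asym hvu).
  by have := p_sum u; rewrite (bigID S) /= -/alpha; lra.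
have D0 : 0 < 1 - alpha + beta by lra.
have /andP[a_gt0 a_lt1] : 0 < beta / (1 - alpha + beta) < 1.
  by rewrite divr_gt0 //= ltr_pdivrMr // mul1r; lra.
exists (beta / (1 - alpha + beta)); first by rewrite a_gt0 a_lt1.
split; first split.
- move=> o; have [[pu_ge0 _] [pv_ge0 _]] :=
    (t_dist u (rank_order X), t_dist v (rank_order X)).
  by rewrite ffunE addr_ge0 // mulr_ge0 // ?subr_ge0 ltW.
- exact: sum_mix.
- move=> o'; under eq_bigr do rewrite markov_pair //.
  by apply: two_block_stationary; rewrite ?p_sum ?gt_eqF.
Qed.

Lemma menu_invariant_rows_eq :
  (2 < #|X|)%N -> menu_invariant t -> forall x y o, t x o = t y o.
Proof.
move=> X_gt2 t_inv x y o; rewrite !t_row; have [-> // | nxy] := eqVneq x y.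
have [z zx zy] := exists_neq_pair x y X_gt2.
have [nxz nyz] : x != z /\ y != z by rewrite ![_ == z]eq_sym.
have [a a01 st_xy] := pair_stationary nxy.
have [b b01 st_xz] := pair_stationary nxz.
have [c c01 st_yz] := pair_stationary nyz.
have eq_xz := t_inv _ _ (menu_pair nxy) (menu_pair nxz) _ _ st_xy st_xz.
have eq_yz := t_inv _ _ (menu_pair nxy) (menu_pair nyz) _ _ st_xy st_yz.
apply/ffunP => o'; apply: (eq_of_point_inside_edges (Z := p z o') a01 b01 c01).
  by move/ffunP/(_ o'): eq_xz; rewrite !ffunE.
by move/ffunP/(_ o'): eq_yz; rewrite !ffunE.
Qed.

End StateIndependent.

Theorem proposition6 (X : finType) (R : realFieldType) (t : transition X R) :
  (2 < #|X|)%N ->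
  is_transition t -> full_support t -> state_independent t ->
  (menu_invariant t <-> forall (x y : X) (o : linord X), t x o = t y o).
Proof.
move=> X_gt2 t_dist t_full t_si; split.
  exact: menu_invariant_rows_eq.
exact: rows_eq_menu_invariant.
Qed.
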